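(* Let $G=\langle a,s,t \mid a^2=1,\ [a,a^t]=1,\ [s,t]=1,\ a^s=aa^t\rangle$. Then in $G$: (i) $[a^{t^i},a^{t^j}]=1$ for all $i,j\in\mathbb Z$; (ii) $[a^{s^i},a^{t^j}]=1$ for all integers $i<0$ and all $j\in\mathbb Z$; (iii) $[a^{s^i},a^{s^j}]=1$ for all integers $i,j<0$.
   Context: Notation: $[x,y]=x^{-1}y^{-1}xy$ and $x^y=y^{-1}xy$. *)

From Stdlib Require Import ZArith.

Record Group := {
  carrier :> Type;
  gmul : carrier -> carrier -> carrier;
  ginv : carrier -> carrier;
  gone : carrier;
  gmulA : forall x y z, gmul x (gmul y z) = gmul (gmul x y) z;
  gmul1l : forall x, gmul gone x = x;
  gmul1r : forall x, gmul x gone = x;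
  gmulVl : forall x, gmul (ginv x) x = gone;
  gmulVr : forall x, gmul x (ginv x) = gone
}.

Arguments gmul {g} _ _.
Arguments ginv {g} _.
Arguments gone {g}.

Fixpoint npow {G : Group} (x : G) (n : nat) : G :=
  match n with O => gone | S m => gmul x (npow x m) end.

Definition zpow {G : Group} (x : G) (n : Z) : G :=
  match n with
  | Z0 => gone
  | Zpos p => npow x (Pos.to_nat p)
  | Zneg p => npow (ginv x) (Pos.to_nat p)
  end.

Definition conj {G : Group} (x y : G) : G := gmul (ginv y) (gmul x y).

Definition comm {G : Group} (x y : G) : G :=
  gmul (ginv x) (gmul (ginv y) (gmul x y)).

From Stdlib Require Import ZArith Lia.

(* Write a_j = a^(t^j).  As s and t commute, a^s = a a^t gives a_j^s = a_j a_(j+1).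
   Conjugating [a_m, a_(m+n+1)] = 1 by s and cancelling the factors already known to
   commute yields [a_m, a_(m+n+2)] = 1, so induction on the gap shows that the a_j
   commute pairwise.  For i <= 0, conjugation by
   s^(-i) sends a^(s^i) to a and every a_j into the abelian subgroup generated by the
   a_k, which gives (ii); conjugating by s^(-j) reduces (iii) to (ii). *)

Definition commute {G : Group} (x y : G) : Prop := gmul x y = gmul y x.

Section GroupTheory.

Context {G : Group}.
Implicit Types x y z w : G.

Lemma mulKg x y : gmul (ginv x) (gmul x y) = y.
Proof. rewrite gmulA, gmulVl, gmul1l; reflexivity. Qed.

Lemma mulKVg x y : gmul x (gmul (ginv x) y) = y.
Proof. rewrite gmulA, gmulVr, gmul1l; reflexivity. Qed.

Lemma invg_unique x y : gmul x y = gone -> y = ginv x.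
Proof. intros Hxy. rewrite <- (mulKg x y), Hxy, gmul1r. reflexivity. Qed.

Lemma invMg x y : ginv (gmul x y) = gmul (ginv y) (ginv x).
Proof. symmetry. apply invg_unique. rewrite <- gmulA, mulKVg, gmulVr. reflexivity. Qed.

Lemma invg1 : ginv (@gone G) = gone.
Proof. symmetry. apply invg_unique, gmul1l. Qed.

Lemma conjg1 x : conj x gone = x.
Proof. unfold conj. rewrite invg1, gmul1l, gmul1r. reflexivity. Qed.

Lemma conjMg x y z : conj (gmul x y) z = gmul (conj x z) (conj y z).
Proof. unfold conj. rewrite <- !gmulA, mulKVg. reflexivity. Qed.

Lemma conjgM x y z : conj x (gmul y z) = conj (conj x y) z.
Proof. unfold conj. rewrite invMg, <- !gmulA. reflexivity. Qed.

Lemma conjgK x z : gmul z (gmul (conj x z) (ginv z)) = x.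
Proof. unfold conj. rewrite <- !gmulA, gmulVr, gmul1r, mulKVg. reflexivity. Qed.

Lemma conjg_inj x y z : conj x z = conj y z -> x = y.
Proof. intros Hxy. rewrite <- (conjgK x z), Hxy, conjgK. reflexivity. Qed.

Lemma comm_eq1 x y : comm x y = gone <-> commute x y.
Proof.
  unfold comm, commute. split; intros Hxy.
  - transitivity (gmul y (gmul x (gmul (ginv x) (gmul (ginv y) (gmul x y))))).
    + rewrite !mulKVg. reflexivity.
    + rewrite Hxy, gmul1r. reflexivity.
  - rewrite Hxy, mulKg, gmulVl. reflexivity.
Qed.

Lemma commute_refl x : commute x x.
Proof. reflexivity. Qed.

Lemma commute_sym x y : commute x y -> commute y x.
Proof. unfold commute. auto. Qed.

Lemma commute1 x : commute x gone.
Proof. unfold commute. rewrite gmul1l, gmul1r. reflexivity. Qed.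

Lemma commuteM x y z : commute x y -> commute x z -> commute x (gmul y z).
Proof.
  unfold commute. intros Hxy Hxz.
  rewrite gmulA, Hxy, <- gmulA, Hxz, gmulA. reflexivity.
Qed.

Lemma commuteV x y : commute x y -> commute x (ginv y).
Proof.
  unfold commute. intros Hxy.
  transitivity (gmul (ginv y) (gmul (gmul x y) (ginv y))).
  - rewrite Hxy, <- (gmulA _ y x), mulKg. reflexivity.
  - rewrite <- gmulA, gmulVr, gmul1r. reflexivity.
Qed.

Lemma commuteMKl w x y : commute w x -> commute w (gmul x y) -> commute w y.
Proof.
  intros Hwx Hwxy. rewrite <- (mulKg x y). exact (commuteM _ _ _ (commuteV _ _ Hwx) Hwxy).
Qed.

Lemma commuteMKr w x y : commute y w -> commute (gmul x y) w -> commute x w.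
Proof.
  intros Hyw Hxyw. apply commute_sym.
  rewrite <- (gmul1r _ x), <- (gmulVr _ y), gmulA.
  apply commuteM; [apply commute_sym, Hxyw | apply commuteV, commute_sym, Hyw].
Qed.

Lemma commute_conjg x y z : commute (conj x z) (conj y z) <-> commute x y.
Proof.
  unfold commute. rewrite <- !conjMg. split; intros Hxy.
  - exact (conjg_inj _ _ _ Hxy).
  - rewrite Hxy. reflexivity.
Qed.

Lemma commute_npow x y n : commute x y -> commute x (npow y n).
Proof.
  intros Hxy. induction n as [|n IHn]; simpl.
  - apply commute1.
  - apply commuteM; assumption.
Qed.

Lemma commute_zpow x y n : commute x y -> commute x (zpow y n).
Proof.
  intros Hxy. destruct n; simpl.
  - apply commute1.
  - apply commute_npow, Hxy.
  - apply commute_npow, commuteV, Hxy.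
Qed.

Lemma zpow0 x : zpow x 0 = gone.
Proof. reflexivity. Qed.

Lemma zpow_nat x n : zpow x (Z.of_nat n) = npow x n.
Proof. destruct n; simpl; [|rewrite SuccNat2Pos.id_succ]; reflexivity. Qed.

Lemma zpow_opp_nat x n : zpow x (- Z.of_nat n) = npow (ginv x) n.
Proof. destruct n; simpl; [|rewrite SuccNat2Pos.id_succ]; reflexivity. Qed.

Lemma zpowS x n : zpow x (n + 1) = gmul x (zpow x n).
Proof.
  destruct (Z_le_gt_dec 0 n) as [Hn | Hn].
  - replace n with (Z.of_nat (Z.to_nat n)) by lia.
    replace (Z.of_nat (Z.to_nat n) + 1)%Z with (Z.of_nat (S (Z.to_nat n))) by lia.
    rewrite !zpow_nat. reflexivity.
  - replace n with (- Z.of_nat (S (Z.to_nat (- n - 1))))%Z by lia.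
    replace (- Z.of_nat (S (Z.to_nat (- n - 1))) + 1)%Z
      with (- Z.of_nat (Z.to_nat (- n - 1)))%Z by lia.
    rewrite !zpow_opp_nat. simpl. rewrite mulKVg. reflexivity.
Qed.

Lemma zpow_pred x n : zpow x (Z.pred n) = gmul (ginv x) (zpow x n).
Proof.
  rewrite <- (mulKg x (zpow x (Z.pred n))), <- zpowS, Z.add_1_r, Z.succ_pred.
  reflexivity.
Qed.

Lemma zpowD x m n : zpow x (m + n) = gmul (zpow x m) (zpow x n).
Proof.
  induction m as [|m IHm|m IHm] using Z.peano_ind.
  - simpl. rewrite gmul1l. reflexivity.
  - replace (Z.succ m + n)%Z with (m + n + 1)%Z by lia. unfold Z.succ.
    rewrite !zpowS, IHm, gmulA. reflexivity.
  - replace (Z.pred m + n)%Z with (Z.pred (m + n)) by lia.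
    rewrite !zpow_pred, IHm, gmulA. reflexivity.
Qed.

Lemma conjg_zpowD x y m n : conj (conj x (zpow y m)) (zpow y n) = conj x (zpow y (m + n)).
Proof. rewrite zpowD, conjgM. reflexivity. Qed.

End GroupTheory.

Section ShiftedFamily.

Variables (G : Group) (s : G) (A : Z -> G).
Hypothesis commute_next : forall m, commute (A m) (A (m + 1)).
Hypothesis conj_shift : forall m, conj (A m) s = gmul (A m) (A (m + 1)).

Lemma commute_gap_step m k :
  commute (A m) (A k) -> commute (A (m + 1)) (A k) ->
  commute (A (m + 1)) (A (k + 1)) -> commute (A m) (A (k + 1)).
Proof.
  intros Hmk Hm1k Hm1k1.
  assert (Hconj : commute (gmul (A m) (A (m + 1))) (gmul (A k) (A (k + 1)))).
  { rewrite <- !conj_shift. apply commute_conjg, Hmk. }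
  assert (Hprod : commute (gmul (A m) (A (m + 1))) (A k)).
  { apply commute_sym, commuteM; apply commute_sym; assumption. }
  exact (commuteMKr _ _ _ Hm1k1 (commuteMKl _ _ _ Hprod Hconj)).
Qed.

Lemma commute_gap n : forall m,
  commute (A m) (A (m + Z.of_nat n)) /\ commute (A m) (A (m + Z.of_nat n + 1)).
Proof.
  induction n as [|n IHn]; intros m.
  - rewrite Z.add_0_r. split; [apply commute_refl | apply commute_next].
  - rewrite Nat2Z.inj_succ, <- Z.add_1_r, Z.add_assoc. split; [apply IHn |].
    destruct (IHn (m + 1)%Z) as [Hm1k Hm1k1].
    replace (m + 1 + Z.of_nat n)%Z with (m + Z.of_nat n + 1)%Z in Hm1k, Hm1k1 by lia.
    apply commute_gap_step; [apply IHn | exact Hm1k | exact Hm1k1].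
Qed.

Lemma commute_family i j : commute (A i) (A j).
Proof.
  destruct (Z_le_gt_dec i j) as [Hij | Hij].
  - replace j with (i + Z.of_nat (Z.to_nat (j - i)))%Z by lia. apply commute_gap.
  - apply commute_sym.
    replace i with (j + Z.of_nat (Z.to_nat (i - j)))%Z by lia. apply commute_gap.
Qed.

Lemma commute_family_conj_zpow k : (0 <= k)%Z ->
  forall j l, commute (A l) (conj (A j) (zpow s k)).
Proof.
  intros Hk. pattern k. apply natlike_ind; [| | exact Hk].
  - intros j l. rewrite zpow0, conjg1. apply commute_family.
  - intros k' _ IHk j l. unfold Z.succ.
    rewrite zpowS, conjgM, conj_shift, conjMg. apply commuteM; apply IHk.
Qed.

End ShiftedFamily.

Section Presentation.

Variables (G : Group) (a s t : G).
Hypothesis commute_a_at : commute a (conj a t).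
Hypothesis commute_st : commute s t.
Hypothesis conj_a_s : conj a s = gmul a (conj a t).

Lemma conj_a_tpow0 : conj a (zpow t 0) = a.
Proof. apply conjg1. Qed.

Lemma conj_a_tpowS j : conj a (zpow t (j + 1)) = conj (conj a t) (zpow t j).
Proof. rewrite zpowS, conjgM. reflexivity. Qed.

Lemma commute_a_tpow_next j : commute (conj a (zpow t j)) (conj a (zpow t (j + 1))).
Proof. rewrite conj_a_tpowS. apply commute_conjg, commute_a_at. Qed.

Lemma conj_a_tpow_s j :
  conj (conj a (zpow t j)) s = gmul (conj a (zpow t j)) (conj a (zpow t (j + 1))).
Proof.
  assert (Hs : commute s (zpow t j)) by apply commute_zpow, commute_st.
  rewrite <- conjgM, <- Hs, conjgM, conj_a_s, conjMg, conj_a_tpowS. reflexivity.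
Qed.

Lemma commute_a_tpow i j : commute (conj a (zpow t i)) (conj a (zpow t j)).
Proof. exact (commute_family _ _ _ commute_a_tpow_next conj_a_tpow_s i j). Qed.

Lemma commute_a_spow_tpow i j : (i <= 0)%Z ->
  commute (conj a (zpow s i)) (conj a (zpow t j)).
Proof.
  intros Hi. apply (commute_conjg _ _ (zpow s (- i))).
  rewrite conjg_zpowD, Z.add_opp_diag_r, zpow0, conjg1, <- conj_a_tpow0 at 1.
  apply (commute_family_conj_zpow _ _ _ commute_a_tpow_next conj_a_tpow_s); lia.
Qed.

Lemma commute_a_spow i j : (i <= 0)%Z -> (j <= 0)%Z ->
  commute (conj a (zpow s i)) (conj a (zpow s j)).
Proof.
  revert i j.
  assert (Hle : forall i j, (i <= j <= 0)%Z ->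
            commute (conj a (zpow s i)) (conj a (zpow s j))).
  { intros i j Hij. apply (commute_conjg _ _ (zpow s (- j))).
    rewrite !conjg_zpowD, Z.add_opp_diag_r, zpow0, conjg1.
    rewrite <- conj_a_tpow0 at 2. apply commute_a_spow_tpow. lia. }
  intros i j Hi Hj. destruct (Z_le_gt_dec i j).
  - apply Hle. lia.
  - apply commute_sym, Hle. lia.
Qed.

End Presentation.

Theorem mainTheorem2 :
  forall (H : Group) (a s t : H),
    gmul a a = gone ->
    comm a (conj a t) = gone ->
    comm s t = gone ->
    conj a s = gmul a (conj a t) ->
    (forall i j : Z, comm (conj a (zpow t i)) (conj a (zpow t j)) = gone) /\
    (forall i j : Z, (i < 0)%Z ->
       comm (conj a (zpow s i)) (conj a (zpow t j)) = gone) /\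
    (forall i j : Z, (i < 0)%Z -> (j < 0)%Z ->
       comm (conj a (zpow s i)) (conj a (zpow s j)) = gone).
Proof.
  intros H a s t _ Hat Hst Has.
  apply comm_eq1 in Hat. apply comm_eq1 in Hst.
  split; [| split]; intros i j; intros; apply comm_eq1.
  - exact (commute_a_tpow H a s t Hat Hst Has i j).
  - apply (commute_a_spow_tpow H a s t Hat Hst Has). lia.
  - apply (commute_a_spow H a s t Hat Hst Has); lia.
Qed.
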